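(* Let $D\in\mathbb{N}_1$ and let $\pi^+_D:=\sum_{n\in\mathcal{N}^g,\ \ell(n)\le D}\pi(n)$. Then the expected number of node expansions of $\mathrm{multiTS}(\infty,D)$ before (and including) reaching a node of $\mathcal{N}^g$ satisfies $$\mathbb{E}\bigl[N(\mathrm{multiTS}(\infty,D),\mathcal{N}^g)\bigr]\le \frac{D}{\pi^+_D}.$$
   Context: Setting: a finite action set $\mathcal{A}$, a set of states $\mathcal{S}$ with initial state $s_0$, a deterministic transition function $T:\mathcal{S}\times\mathcal{A}\to\mathcal{S}$, and a set of goal states $\mathcal{G}\subseteq\mathcal{S}$. Nodes are finite sequences of actions; the root $n_0$ is the empty sequence; $T(n)$ is the state reached from $s_0$ by applying the actions of $n$; for a node of $t$ actions, $\ell(n):=t+1$. A policy is a function $\pi$ from nodes to $[0,1]$ with $\pi(n_0)=1$ and $\pi(n)=\sum_{a\in\mathcal{A}}\pi(na)$, with conditional probabilities $\pi(a\mid n)=\pi(na)/\pi(n)$. The target set $\mathcal{N}^g$ is the set of nodes $n$ with $T(n)\in\mathcal{G}$ such that no proper prefix $m$ of $n$ has $T(m)\in\mathcal{G}$. A trial of depth $D$ samples a path $m_1=n_0, m_2=m_1a_1, \dots, m_D=m_{D-1}a_{D-1}$ with $a_i\sim\pi(\cdot\mid m_i)$ and tests $m_1,m_2,\dots$ in order, each test counting as one node expansion, stopping with success at the first $m_i$ with $T(m_i)\in\mathcal{G}$. $\mathrm{multiTS}(\infty,D)$ repeats independent trials of depth $D$ until a success; $N(\mathrm{multiTS}(\infty,D),\mathcal{N}^g)$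 is the total number of node expansions over all trials until success. (If $\pi^+_D=0$ the bound is $+\infty$.) *)

From HB Require Import structures.
From mathcomp Require Import all_boot all_order all_algebra.
From mathcomp Require Import mathcomp_extra boolp classical_sets reals ereal
  topology normedtype sequences.
Set Implicit Arguments.
Unset Strict Implicit.
Unset Printing Implicit Defensive.
Import Order.TTheory GRing.Theory Num.Theory.
Local Open Scope ring_scope.

Section TreeSearch.
Variables (R : realType) (A : finType) (S : Type) (s0 : S)
  (T : S -> A -> S) (G : pred S) (pi : seq A -> R).

(* A node is a finite sequence of actions; [rcons n a] is the node "na". *)

Definition stateof (n : seq A) : S := foldl T s0 n.

Definition is_policy : Prop :=
  [/\ pi [::] = 1,
      (forall n, 0 <= pi n <= 1) &
      (forall n, pi n = \sum_(a : A) pi (rcons n a))].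

Definition in_target (n : seq A) : bool :=
  G (stateof n) && [forall i : 'I_(size n), ~~ G (stateof (take i n))].

(* pi^+_D = sum of pi(n) over n in N^g with l(n) = |n|+1 <= D. *)
Definition pi_plus (D : nat) : R :=
  \sum_(t < D) \sum_(n : t.-tuple A | in_target n) pi n.

(* Probability that a trial samples the action sequence p:
   prod_i pi(a_i | m_i), with pi(a | n) = pi(na)/pi(n), m_i = take i p. *)
Definition path_prob (p : seq A) : R :=
  \prod_(i < size p) (pi (take i.+1 p) / pi (take i p)).

(* The nodes tested by a trial along p are m_1 = take 0 p, ..., take (size p) p. *)
Definition trial_success (p : seq A) : bool :=
  has (fun i => G (stateof (take i p))) (iota 0 (size p).+1).

Definition trial_cost (p : seq A) : nat :=
  if trial_success p
  then (find (fun i => G (stateof (take i p))) (iota 0 (size p).+1)).+1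
  else (size p).+1.

(* A history of multiTS(oo,D) stopping at trial k+1: the sampled paths of the
   k+1 trials (each of D-1 actions), the first k failing, the last succeeding. *)
Definition path_type (D : nat) := (D.-1).-tuple A.

Definition hist_ok (D k : nat) (h : {ffun 'I_k.+1 -> path_type D}) : bool :=
  [forall i : 'I_k.+1, ((i < k)%N ==> ~~ trial_success (h i))]
  && trial_success (h ord_max).

Definition hist_prob (D k : nat) (h : {ffun 'I_k.+1 -> path_type D}) : R :=
  \prod_(i < k.+1) path_prob (h i).

Definition hist_cost (D k : nat) (h : {ffun 'I_k.+1 -> path_type D}) : nat :=
  \sum_(i < k.+1) trial_cost (h i).

(* P(multiTS stops exactly at trial k+1) *)
Definition stop_prob (D k : nat) : R :=
  \sum_(h : {ffun 'I_k.+1 -> path_type D} | hist_ok h) hist_prob h.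

(* E[N ; multiTS stops exactly at trial k+1] *)
Definition stop_cost_mass (D k : nat) : R :=
  \sum_(h : {ffun 'I_k.+1 -> path_type D} | hist_ok h)
     hist_prob h * (hist_cost h)%:R.

(* E[N(multiTS(oo,D), N^g)]: N = +oo on the event that no trial ever
   succeeds, so the expectation is +oo unless that event has probability 0. *)
Definition expected_expansions (D : nat) : \bar R :=
  if (\sum_(0 <= k <oo) (stop_prob D k)%:E == 1%E)%E
  then (\sum_(0 <= k <oo) (stop_cost_mass D k)%:E)%E
  else +oo%E.

End TreeSearch.

(* A trial follows a path p of D-1 actions with probability pi p, since the
   conditional probabilities telescope.  It succeeds iff exactly one prefix of p
   is a first goal node, and summing over these prefixes shows that a trial
   succeeds with probability pi^+_D.  The trials are independent, so the number
   of trials is geometric with mean 1/pi^+_D, and each trial costs at most D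
   expansions. *)

From Pilot Require Import Defs.
From HB Require Import structures.
From mathcomp Require Import all_boot all_order all_algebra.
From mathcomp Require Import ring.
From mathcomp Require Import mathcomp_extra boolp classical_sets reals ereal
  topology normedtype sequences.
Import Order.TTheory GRing.Theory Num.Theory.
Import numFieldNormedType.Exports.
Local Open Scope ring_scope.

Section TupleSums.
Context {V : nmodType} {A : finType}.

Lemma big_tuple0 (F : seq A -> V) : \sum_(p : 0.-tuple A) F p = F [::].
Proof.
rewrite (big_pred1 [tuple]) // => p.
by apply/esym/eqP; apply: val_inj; case: p => [[]].
Qed.

Lemma big_tuple_cons m (F : seq A -> V) :
  \sum_(p : m.+1.-tuple A) F p = \sum_(a : A) \sum_(p : m.-tuple A) F (a :: p).
Proof.
rewrite pair_bigA /=.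
rewrite (reindex (fun u : A * m.-tuple A => [tuple of u.1 :: u.2])) //=.
exists (fun p : m.+1.-tuple A => (thead p, [tuple of behead p])).
  by move=> [a p] _; congr pair; apply: val_inj.
by move=> p _; rewrite [in RHS](tuple_eta p).
Qed.

End TupleSums.

Lemma sum_first_true (V : pzSemiRingType) (f : pred nat) N :
  \sum_(i < N) (f i && all (predC f) (iota 0 i))%:R =
  (has f (iota 0 N))%:R :> V.
Proof.
elim: N => [|N IH]; first by rewrite big_ord0.
have -> : iota 0 N.+1 = iota 0 N ++ [:: N] by rewrite -addn1 iotaD.
rewrite big_ord_recr IH /= has_cat /= orbF all_predC.
by case: (has f _); case: (f N); rewrite ?addr0 ?add0r.
Qed.

Lemma path_prob_rcons (R : realType) (A : finType) (pi : seq A -> R) p a :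
  path_prob pi (rcons p a) = path_prob pi p * (pi (rcons p a) / pi p).
Proof.
rewrite /path_prob size_rcons big_ord_recr /=; congr (_ * (_ / _)).
- by apply: eq_bigr => i _; rewrite -cats1 !takel_cat // ltnW.
- by rewrite take_oversize // size_rcons.
- by rewrite -cats1 take_size_cat.
Qed.

Section Policy.
Context {R : realType} {A : finType} { pi : seq A -> R }.
Hypothesis pi_policy : is_policy pi.

Lemma policy_ge0 n : 0 <= pi n.
Proof. by case: pi_policy => _ pi01 _; case/andP: (pi01 n). Qed.

Lemma policy_rcons_le n a : pi (rcons n a) <= pi n.
Proof.
case: pi_policy => _ _ pi_sum; rewrite [leRHS]pi_sum (bigD1 a) //= lerDl.
by apply: sumr_ge0 => b _; apply: policy_ge0.
Qed.

Lemma sum_policy_cat m n : \sum_(p : m.-tuple A) pi (n ++ p) = pi n.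
Proof.
elim: m n => [|m IH] n.
  by rewrite (big_tuple0 (fun p => pi (n ++ p))) cats0.
rewrite (big_tuple_cons _ (fun p => pi (n ++ p))); case: pi_policy => _ _ ->.
apply: eq_bigr => a _.
by rewrite -IH; apply: eq_bigr => p _; rewrite cat_rcons.
Qed.

Lemma sum_policy_take (f : seq A -> R) i m n : (i <= m)%N ->
  \sum_(p : m.-tuple A) f (n ++ take i p) * pi (n ++ p) =
  \sum_(q : i.-tuple A) f (n ++ q) * pi (n ++ q).
Proof.
elim: i m n => [|i IH] m n le_im.
  rewrite (big_tuple0 (fun q => f (n ++ q) * pi (n ++ q))) cats0.
  rewrite -(sum_policy_cat m) mulr_sumr.
  by apply: eq_bigr => p _; rewrite take0 cats0.
case: m le_im => [//|m] le_im.
rewrite (big_tuple_cons _ (fun p => f (n ++ take i.+1 p) * pi (n ++ p))).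
rewrite (big_tuple_cons _ (fun q => f (n ++ q) * pi (n ++ q))).
apply: eq_bigr => a _ /=.
under eq_bigr do rewrite -!cat_rcons.
under [RHS]eq_bigr do rewrite -!cat_rcons.
exact: IH.
Qed.

Lemma path_probE p : path_prob pi p = pi p.
Proof.
elim/last_ind: p => [|p a IH].
  by rewrite /path_prob big_ord0; case: pi_policy.
rewrite path_prob_rcons IH.
have [pi0|pi_neq0] := eqVneq (pi p) 0; last by rewrite mulrC mulfVK.
(* The ratio is then [_ / 0 = 0], which is right since [pi (rcons p a) = 0]. *)
rewrite pi0 mul0r; apply/esym/eqP.
by rewrite eq_le policy_ge0 andbT -pi0 policy_rcons_le.
Qed.

Lemma path_prob_ge0 p : 0 <= path_prob pi p.
Proof. by rewrite path_probE policy_ge0. Qed.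

End Policy.

Section Trials.
Context {R : realType} {A : finType} {S : Type}.
Variables (s0 : S) (T : S -> A -> S) (G : pred S).
Context { pi : seq A -> R }.
Hypothesis pi_policy : is_policy pi.

Local Notation goal_at p i := (G (stateof s0 T (take i p))).
Local Notation success := (trial_success s0 T G).
Local Notation target := (in_target s0 T G).
Local Notation pi_plus := (pi_plus s0 T G pi).

Lemma in_target_take p i : (i <= size p)%N ->
  target (take i p) = goal_at p i && all (fun j => ~~ goal_at p j) (iota 0 i).
Proof.
move=> le_ip; rewrite /in_target size_takel //; congr andb.
apply/forallP/allP => [prefix_ok j|prefix_ok j].
  rewrite mem_iota => /andP[_ lt_ji].
  by rewrite -(take_takel _ (ltnW lt_ji)) (prefix_ok (Ordinal lt_ji)).
by rewrite take_takel 1?ltnW // prefix_ok // mem_iota /=.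
Qed.

Lemma trial_success_first_target p :
  (success p)%:R = \sum_(i < (size p).+1) (target (take i p))%:R :> R.
Proof.
rewrite -[LHS](sum_first_true _ (fun i => goal_at p i)); apply: eq_bigr => i _.
by rewrite in_target_take // -ltnS.
Qed.

Lemma sum_policy_success m :
  \sum_(p : m.-tuple A | success p) pi p = pi_plus m.+1.
Proof.
rewrite big_mkcond /=.
under eq_bigr => p _.
  rewrite -mulrb -mulr_natl trial_success_first_target size_tuple mulr_suml.
  over.
rewrite exchange_big; apply: eq_bigr => i _.
have le_im : (i <= m)%N by rewrite -ltnS.
have /= -> := sum_policy_take pi_policy (fun q => (target q)%:R) _ _ [::] le_im.
by rewrite [RHS]big_mkcond; apply: eq_bigr => q _; rewrite mulr_natl mulrb.
Qed.

Lemma pi_plus_le1 D : pi_plus D <= 1.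
Proof.
case: D => [|m]; first by rewrite /Defs.pi_plus big_ord0.
case: pi_policy => pi_nil _ _.
rewrite -sum_policy_success -pi_nil -(sum_policy_cat pi_policy m [::]) /=.
rewrite [leRHS](bigID (fun p : m.-tuple A => success p)) /= lerDl.
by apply: sumr_ge0 => p _; apply: policy_ge0.
Qed.

Lemma trial_cost_le p : (trial_cost s0 T G p <= (size p).+1)%N.
Proof.
rewrite /trial_cost; case: ifP => // found.
by move: found; rewrite /trial_success has_find size_iota.
Qed.

Context {D : nat}.
Hypothesis D_gt0 : (0 < D)%N.

Lemma hist_cost_le k (h : {ffun 'I_k.+1 -> path_type A D}) :
  (hist_cost s0 T G h <= k.+1 * D)%N.
Proof.
rewrite /hist_cost -[X in (_ <= X * D)%N](card_ord k.+1) -sum_nat_const.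
apply: leq_sum => i _.
by rewrite (leq_trans (trial_cost_le _)) // size_tuple prednK.
Qed.

Lemma sum_path_prob_success :
  \sum_(p : path_type A D | success p) path_prob pi p = pi_plus D.
Proof.
under eq_bigr do rewrite (path_probE pi_policy).
by rewrite sum_policy_success prednK.
Qed.

Lemma sum_path_prob_failure :
  \sum_(p : path_type A D | ~~ success p) path_prob pi p = 1 - pi_plus D.
Proof.
have := sum_policy_cat pi_policy D.-1 [::]; case: pi_policy => -> _ _ /= total.
under eq_bigr do rewrite (path_probE pi_policy).
rewrite -[in RHS](prednK D_gt0) -sum_policy_success -total.
rewrite [X in X - _](bigID (fun p : path_type A D => success p)) /=.
by rewrite addrC addrK.
Qed.

Lemma hist_ok_family k (h : {ffun 'I_k.+1 -> path_type A D}) :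
  hist_ok s0 T G h =
  (h \in family (fun i : 'I_k.+1 =>
     if (i < k)%N then [pred p : path_type A D | ~~ success p]
     else [pred p : path_type A D | success p])).
Proof.
have ord_maxE (i : 'I_k.+1) : ~~ (i < k)%N -> i = ord_max.
  by move=> ge_ik; apply/val_inj/eqP; rewrite eqn_leq -ltnS ltn_ord leqNgt.
apply/andP/familyP => [[/forallP fails succeeds] i | all_ok].
  case: ifPn => [lt_ik|/ord_maxE->]; last exact: succeeds.
  exact: implyP (fails i) lt_ik.
split; last by have := all_ok ord_max; rewrite ltnn.
by apply/forallP => i; apply/implyP => lt_ik; have := all_ok i; rewrite lt_ik.
Qed.

Lemma stop_probE k :
  stop_prob s0 T G pi D k = geometric (pi_plus D) (1 - pi_plus D) k.
Proof.
rewrite /stop_prob (eq_bigl _ _ (@hist_ok_family k)) /hist_prob.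
(* The trials are independent: the sum over histories is a product of sums. *)
rewrite -(bigA_distr_big_dep _ (fun _ (p : path_type A D) => path_prob pi p)).
rewrite big_ord_recr /= ltnn.
under eq_bigr => i _ do rewrite ltn_ord sum_path_prob_failure.
by rewrite sum_path_prob_success prodr_const card_ord mulrC.
Qed.

Lemma stop_cost_mass_ge0 k : 0 <= stop_cost_mass s0 T G pi D k.
Proof.
apply: sumr_ge0 => h _; apply: mulr_ge0 => //.
by apply: prodr_ge0 => i _; apply: path_prob_ge0.
Qed.

Lemma stop_cost_mass_le k :
  stop_cost_mass s0 T G pi D k <= (k.+1 * D)%:R * stop_prob s0 T G pi D k.
Proof.
rewrite /stop_cost_mass /stop_prob mulr_sumr; apply: ler_sum => h _.
rewrite mulrC ler_wpM2r ?ler_nat ?hist_cost_le //.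
by apply: prodr_ge0 => i _; apply: path_prob_ge0.
Qed.

End Trials.

Lemma sum_succ_geometric (R : comNzRingType) (x : R) n :
  (1 - x) ^+ 2 * \sum_(k < n) k.+1%:R * x ^+ k =
  1 - x ^+ n * (n.+1%:R - n%:R * x).
Proof.
elim: n => [|n IH]; first by rewrite big_ord0; ring.
by rewrite big_ord_recr mulrDr IH /= (exprS x); ring.
Qed.

Lemma sum_succ_geometric_le (R : realFieldType) (q : R) n : 0 < q <= 1 ->
  \sum_(k < n) k.+1%:R * geometric q (1 - q) k <= q^-1.
Proof.
case/andP=> q_gt0 q_le1; set S := \sum_(k < n) k.+1%:R * (1 - q) ^+ k.
have S_eq : q ^+ 2 * S = 1 - (1 - q) ^+ n * (1 + n%:R * q).
  rewrite -[q in q ^+ 2](subKr 1) sum_succ_geometric -natr1.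
  by congr (_ - _ * _); ring.
have -> : \sum_(k < n) k.+1%:R * geometric q (1 - q) k = (q ^+ 2 * S) / q.
  rewrite mulr_sumr mulr_suml; apply: eq_bigr => k _; rewrite /geometric /=.
  by field; rewrite gt_eqF.
rewrite S_eq -[leRHS]mul1r ler_wpM2r ?invr_ge0 ?(ltW q_gt0) // gerBl.
by rewrite mulr_ge0 ?exprn_ge0 ?subr_ge0 // addr_ge0 // mulr_ge0 // ltW.
Qed.

Lemma eseries_geometric (R : realType) (a x : R) : `|x| < 1 ->
  (\sum_(0 <= k <oo) (geometric a x k)%:E = (a / (1 - x))%:E)%E.
Proof.
move=> x_lt1; under eq_fun do rewrite sumEFin.
rewrite (_ : (fun n => _) = EFin \o series (geometric a x)) ?EFin_lim //.
  by congr EFin; apply/cvg_lim => //; exact: cvg_geometric_series.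
exact: is_cvg_geometric_series.
Qed.

Theorem theorem4 (R : realType) (A : finType) (S : Type) (s0 : S)
    (T : S -> A -> S) (G : pred S) (pi : seq A -> R) (D : nat) :
  (1 <= D)%N ->
  is_policy pi ->
  (expected_expansions s0 T G pi D <=
     (if (0 < pi_plus s0 T G pi D)%R
      then (D%:R / pi_plus s0 T G pi D)%:E
      else +oo))%E.
Proof.
move=> D_gt0 pi_policy; case: ifPn => [q_gt0|_]; last by rewrite leey.
have stop_geometric := stop_probE s0 T G pi_policy D_gt0.
set q := pi_plus s0 T G pi D in q_gt0 stop_geometric *.
have q_le1 : q <= 1 by apply: pi_plus_le1.
have ratio_lt1 : `|1 - q| < 1 by rewrite ger0_norm ?subr_ge0 // gtrBl.
rewrite /expected_expansions.
rewrite (eq_eseriesr (fun k _ => congr1 EFin (stop_geometric k))).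
rewrite eseries_geometric // opprB addrC subrK (divff (lt0r_neq0 q_gt0)) eqxx.
apply: lime_le.
  by apply: is_cvg_nneseries => k _ _; rewrite lee_fin stop_cost_mass_ge0.
apply: nearW => n; rewrite /= sumEFin lee_fin big_mkord.
apply: (@le_trans _ _ (\sum_(k < n) (k.+1 * D)%:R * stop_prob s0 T G pi D k)).
  by apply: ler_sum => k _; apply: stop_cost_mass_le.
under eq_bigr do rewrite stop_geometric natrM mulrAC.
by rewrite -mulr_suml mulrC ler_wpM2l // sum_succ_geometric_le ?q_gt0.
Qed.
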